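(* Let $J\subseteq S$, and define the relation $\Theta$ on $\mathfrak{S}_n^J$ by $(w,w')\in\Theta$ if and only if $\Pi_\downarrow^J(w)=\Pi_\downarrow^J(w')$. Then $\Theta$ is a lattice congruence on the lattice $\mathrm{Weak}(\mathfrak{S}_n^J)=[e,w_\circ^J]$, and the corresponding quotient lattice is (isomorphic to) $\mathcal{T}_n^J$, the set $\mathfrak{S}_n^J(231)$ ordered by $\le_S$.
   Context: $\mathfrak{S}_n$ is the symmetric group on $[n]$, $s_i=(i,i+1)$, $S=\{s_1,\dots,s_{n-1}\}$, one-line notation $w=w_1\cdots w_n$, $\mathrm{inv}(w)=\{(i,j):i<j,\ w_i>w_j\}$, weak order $u\le_S v\iff\mathrm{inv}(u)\subseteq\mathrm{inv}(v)$. For $J\subseteq S$, $\mathfrak{S}_n^J$ is the set of $w$ with $w_i<w_{i+1}$ whenever $s_i\in J$; with the restricted order it is the weak order interval $[e,w_\circ^J]$, where $w_\circ^J$ is the longest element of $\mathfrak{S}_n^J$, and in particular a lattice. Writing $J=S\setminus\{s_{j_1},\dots,s_{j_r}\}$ with $j_1<\dots<j_r$, the $J$-regions are $\{1,\dots,j_1\},\{j_1+1,\dots,j_2\},\dots,\{j_r+1,\dots,n\}$. $\mathfrak{S}_n^J(231)$ is the set of $w\in\mathfrak{S}_n^J$ admitting no indices $i<j<k$ in pairwise different $J$-regions with $w_k<w_i<w_j$ and $w_i=w_k+1$. For $w\in\mathfrak{S}_n^J$, $\Pi_\downarrow^J(w)$ is the unique greatest element of $\mathfrak{S}_n^J(231)$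 that is $\le_S w$ (it exists). A lattice congruence on a lattice $L$ is an equivalence relation $\Theta$ such that $x\,\Theta\,y$ implies $(x\wedge z)\,\Theta\,(y\wedge z)$ and $(x\vee z)\,\Theta\,(y\vee z)$ for all $z\in L$; $L/\Theta$ is the lattice of classes with induced operations. *)

From mathcomp Require Import all_boot all_fingroup.
Set Implicit Arguments. Unset Strict Implicit. Unset Printing Implicit Defensive.

(* Conventions (0-based): positions and values of w : 'S_n are in 'I_n = {0..n-1};
   the one-line notation is w_1..w_n shifted by one (w_{p+1} - 1 = w p).
   The simple generator s_{k+1} (k : 'I_n.-1) swaps positions k and k+1;
   J : {set 'I_n.-1} is a subset of S = {s_1,...,s_{n-1}} via k |-> s_{k+1}. *)

Section Defs.
Variable n : nat.
Implicit Types (J : {set 'I_n.-1}) (u v w x y z m p q t : 'S_n).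

Definition weak_le u v : bool :=
  [forall i : 'I_n, forall j : 'I_n, (i < j) && (u j < u i) ==> (v j < v i)].

Definition parabolic J w : bool :=
  [forall k in J, forall i : 'I_n, forall j : 'I_n,
     (val i == val k) && (val j == (val k).+1) ==> (w i < w j)].

Definition sepJ J (p q : nat) : bool :=
  [exists k : 'I_n.-1, (p <= k) && (k < q) && (k \notin J)].

Definition avoid231 J w : bool :=
  ~~ [exists i : 'I_n, exists j : 'I_n, exists k : 'I_n,
        [&& i < j, j < k, sepJ J i j, sepJ J j k, sepJ J i k,
            w k < w i, w i < w j & (val (w i) == (val (w k)).+1)]].

Definition T231 J w : bool := parabolic J w && avoid231 J w.

Definition isPiDown J w p : bool :=
  [&& T231 J p, weak_le p w &
      [forall q, T231 J q && weak_le q w ==> weak_le q p]].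

Definition PiDown J w : option 'S_n := [pick p | isPiDown J w p].

Definition Theta J w w' : bool := PiDown J w == PiDown J w'.

Definition isMeet J x y m : bool :=
  [&& parabolic J m, weak_le m x, weak_le m y &
      [forall z, parabolic J z && weak_le z x && weak_le z y ==> weak_le z m]].
Definition isJoin J x y m : bool :=
  [&& parabolic J m, weak_le x m, weak_le y m &
      [forall z, parabolic J z && weak_le x z && weak_le y z ==> weak_le m z]].

End Defs.

From mathcomp Require Import all_boot all_fingroup zify.
Set Implicit Arguments. Unset Strict Implicit. Unset Printing Implicit Defensive.

(* The join of x and y has as
   inversions the transitive closure of inv(x) + inv(y); it stays in S_n^J, so
   S_n^J is a lattice, with meets given by a common lower bound of maximal length.
   If w in S_n^J contains a J-231 pattern (i, j, k), exchanging the consecutive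
   values w_i = w_k + 1 and w_k removes exactly the inversion (i, k) and stays in
   S_n^J. A J-231-avoiding t <= w stays below the result: otherwise avoidance
   gives a position p in the region of j with t_k < t_p < t_i, which forces the
   impossible w_k < w_p < w_i. Iterating these exchanges reaches Pi_down(w);
   hence Pi_down is monotone, idempotent and invariant under the exchanges. An
   exchange can moreover be pushed through a join: an avoiding t <= x \/ z stays
   below (exchanged x) \/ z. This yields Pi_down(x \/ z) = Pi_down(Pi_down(x) \/ z),
   the compatibility with joins; compatibility with meets and the description
   of the quotient follow from monotonicity and idempotence. *)

Section WeakOrder.
Variable n : nat.
Implicit Types (u v w : 'S_n) (a b c : 'I_n).

Definition inversion u a b : bool := (a < b) && (u b < u a).

Definition perm_length u : nat := #|[set p : 'I_n * 'I_n | inversion u p.1 p.2]|.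

Lemma weak_leP u v :
  reflect (forall a b, inversion u a b -> inversion v a b) (weak_le u v).
Proof.
apply: (iffP forallP) => [uv a b /andP[ab uba] | uv a].
  by have /forallP/(_ b)/implyP := uv a; rewrite /inversion ab uba; apply.
apply/forallP => b; apply/implyP => /andP[ab uba].
by have /andP[] : inversion v a b by apply: uv; rewrite /inversion ab.
Qed.

Lemma weak_le_refl u : weak_le u u.
Proof. exact/weak_leP. Qed.

Lemma weak_le_trans u v w : weak_le u v -> weak_le v w -> weak_le u w.
Proof. by move=> /weak_leP uv /weak_leP vw; apply/weak_leP => a b /uv/vw. Qed.

Lemma weak_le1 u : weak_le 1%g u.
Proof. by apply/weak_leP => a b /andP[ab]; rewrite !perm1 ltnNge ltnW. Qed.

Lemma inversion_trans u a b c :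
  inversion u a b -> inversion u b c -> inversion u a c.
Proof.
by move=> /andP[ab uba] /andP[bc ucb]; rewrite /inversion (ltn_trans ab bc) (ltn_trans ucb uba).
Qed.

Lemma perm_ltNlt u a b : a != b -> (u a < u b) = ~~ (u b < u a).
Proof.
by move=> ab; rewrite ltn_neqAle -leqNgt andb_idl // => _; rewrite val_eqE (inj_eq perm_inj).
Qed.

Lemma weak_le_ascent u v a b : weak_le u v -> a < b -> v a < v b -> u a < u b.
Proof.
move=> /weak_leP uv ab vab; rewrite perm_ltNlt; last by rewrite neq_ltn ab.
apply/negP => uba.
have /andP[_ vba] : inversion v a b by apply: uv; rewrite /inversion ab.
by move: (ltn_trans vab vba); rewrite ltnn.
Qed.

Lemma card_ltn_ord m : m <= n -> #|[set c : 'I_n | c < m]| = m.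
Proof.
move=> mn; have -> : [set c : 'I_n | c < m] = widen_ord mn @: [set: 'I_m].
  apply/setP => c; rewrite inE; apply/idP/imsetP => [cm | [d _ ->]]; last exact: ltn_ord d.
  by exists (Ordinal cm) => //; apply: val_inj.
by rewrite card_imset ?cardsT ?card_ord // => d e /(congr1 val) de; apply: val_inj.
Qed.

Lemma perm_rank u a : val (u a) = #|[set b | u b < u a]|.
Proof.
rewrite -(card_imset _ (@perm_inj _ u)) -[LHS]card_ltn_ord; last exact/ltnW/ltn_ord.
apply: eq_card => c; rewrite inE.
apply/idP/imsetP => [cu | [b] ]; last by rewrite inE => ? ->.
by exists ((u^-1)%g c); rewrite ?inE permKV.
Qed.

Lemma weak_le_anti u v : weak_le u v -> weak_le v u -> u = v.
Proof.
move=> /weak_leP uv /weak_leP vu.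
have inv_eq a b : a < b -> (u b < u a) = (v b < v a).
  move=> ab; apply/idP/idP => ?.
    by have /andP[] : inversion v a b by apply: uv; rewrite /inversion ab.
  by have /andP[] : inversion u a b by apply: vu; rewrite /inversion ab.
apply/permP => a; apply: val_inj; rewrite (perm_rank u) (perm_rank v).
apply: eq_card => b; rewrite !inE.
have [ba | ab | /val_inj -> ] := ltngtP b a; last by rewrite !ltnn.
  have ba' : b != a by rewrite neq_ltn ba.
  by rewrite (perm_ltNlt u ba') (perm_ltNlt v ba') inv_eq.
exact: inv_eq.
Qed.

Lemma weak_le_length_eq u v : weak_le u v -> perm_length v <= perm_length u -> u = v.
Proof.
move=> uv lenvu; apply: weak_le_anti => //; apply/weak_leP => a b vab.
have sub : [set p | inversion u p.1 p.2] \subset [set p | inversion v p.1 p.2].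
  by apply/subsetP => p; rewrite !inE; move/weak_leP: uv; apply.
have /eqP/setP/(_ (a, b)) : [set p | inversion u p.1 p.2] == [set p | inversion v p.1 p.2].
  by rewrite eqEcard sub.
by rewrite !inE vab.
Qed.

Lemma inversion_split u a b c : a < b -> b < c ->
  inversion u a c -> inversion u a b || inversion u b c.
Proof.
move=> ab bc /andP[_ uca]; rewrite /inversion ab bc /=.
have [uba | uab] := ltnP (u b) (u a); first by [].
by rewrite (leq_trans uca uab) orbT.
Qed.

End WeakOrder.

Section PermOfOrder.
Variables (n : nat) (lt : rel 'I_n).
Hypotheses (lt_irr : irreflexive lt) (lt_trans : transitive lt)
  (lt_total : forall a b, a != b -> lt a b || lt b a).

Definition order_rank a := #|[set b | lt b a]|.

Lemma order_rank_lt a : order_rank a < n.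
Proof.
rewrite -[n in _ < n]card_ord -cardsT; apply: proper_card; apply/properP.
by split; [exact: subsetT | exists a; rewrite ?inE ?lt_irr].
Qed.

Lemma order_rank_mono a b : lt a b -> order_rank a < order_rank b.
Proof.
move=> ab; apply: proper_card; apply/properP; split.
  by apply/subsetP => c; rewrite !inE => ca; exact: lt_trans ca ab.
by exists a; rewrite !inE ?ab ?lt_irr.
Qed.

Lemma order_rank_inj : injective (fun a => Ordinal (order_rank_lt a)).
Proof.
move=> a b /(congr1 val) /= eq_ab; apply/eqP/negPn/negP.
by move=> /lt_total /orP[] /order_rank_mono; rewrite eq_ab ltnn.
Qed.

Definition perm_of_order : 'S_n := perm order_rank_inj.

Lemma perm_of_order_ltE a b : (perm_of_order a < perm_of_order b) = lt a b.
Proof.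
rewrite !permE /=; apply/idP/idP => [rank_ab | /order_rank_mono //].
have [eq_ab | /lt_total /orP[// | /order_rank_mono rank_ba]] := eqVneq a b.
  by rewrite eq_ab ltnn in rank_ab.
by move: (ltn_trans rank_ab rank_ba); rewrite ltnn.
Qed.

End PermOfOrder.

Section WeakJoin.
Variables (n : nat) (x y : 'S_n).
Implicit Types (a b c : 'I_n).

Definition join_step : rel 'I_n := fun a b => inversion x a b || inversion y a b.

Definition join_inv a b := (a < b) && connect join_step a b.

Lemma join_step_lt a b : join_step a b -> a < b.
Proof. by case/orP => /andP[]. Qed.

Lemma join_step_inv a b : join_step a b -> join_inv a b.
Proof. by move=> step_ab; rewrite /join_inv join_step_lt // connect1. Qed.

Lemma join_inv_trans : transitive join_inv.
Proof.
move=> b a c /andP[ab conn_ab] /andP[bc conn_bc].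
by rewrite /join_inv (ltn_trans ab bc) (connect_trans conn_ab conn_bc).
Qed.

Lemma join_inv_min (R : rel 'I_n) :
  transitive R -> subrel join_step R -> subrel join_inv R.
Proof.
move=> R_tr stepR a b /andP[ab /connectP[s]].
have [-> _ eq_b | s_ne p_s ->] := eqVneq s [::]; first by rewrite eq_b ltnn in ab.
elim: s a s_ne p_s {ab} => [//|c s IHs] a _ /= /andP[/stepR Rac p_s].
by case: s IHs p_s => [//|d s] IHs p_s; exact: R_tr Rac (IHs c isT p_s).
Qed.

Lemma join_step_split a b c :
  a < b -> b < c -> join_step a c -> join_step a b || join_step b c.
Proof.
by move=> ab bc /orP[] /(inversion_split ab bc) /orP[] inv; rewrite /join_step inv ?orbT.
Qed.

Lemma join_inv_split a b c :
  a < b -> b < c -> join_inv a c -> join_inv a b || join_inv b c.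
Proof.
move=> ab bc /andP[_ /connectP[s p_s eq_c]].
elim: s a ab p_s eq_c => [|d s IHs] a ab /=.
  by move=> _ eq_c; move: (ltn_trans ab bc); rewrite eq_c ltnn.
case/andP=> step_ad p_s eq_c.
have [bd | db | /val_inj eq_bd] := ltngtP b d.
- case/orP: (join_step_split ab bd step_ad) => [/join_step_inv -> // | step_bd].
  by apply/orP; right; rewrite /join_inv bc; apply/connectP; exists (d :: s); rewrite //= step_bd.
- case/orP: (IHs d db p_s eq_c) => [/(join_inv_trans (join_step_inv step_ad)) -> // | ->].
  by rewrite orbT.
- by rewrite eq_bd join_step_inv.
Qed.

Definition join_lt a b := if a < b then ~~ join_inv a b else join_inv b a.

Lemma join_lt_irr : irreflexive join_lt.
Proof. by move=> a; rewrite /join_lt /join_inv ltnn. Qed.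

Lemma join_lt_total a b : a != b -> join_lt a b || join_lt b a.
Proof.
rewrite /join_lt neq_ltn => /orP[] lt_ab; rewrite lt_ab (leq_gtF (ltnW lt_ab)).
  exact: orNb.
exact: orbN.
Qed.

Lemma join_lt_asym a b : join_lt a b -> ~~ join_lt b a.
Proof.
rewrite /join_lt; case: ltngtP => [ab | ba | /val_inj ->]; rewrite ?negbK //.
by rewrite /join_inv ltnn.
Qed.

Lemma join_lt_trans : transitive join_lt.
Proof.
move=> b a c lt_ab lt_bc.
have [eq_ac | ne_ac] := eqVneq a c.
  by rewrite eq_ac (negPf (join_lt_asym lt_bc)) in lt_ab.
have [eq_ab | ne_ab] := eqVneq a b; first by rewrite eq_ab join_lt_irr in lt_ab.
have [eq_bc | ne_bc] := eqVneq b c; first by rewrite eq_bc join_lt_irr in lt_bc.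
move: lt_ab lt_bc; rewrite /join_lt.
case: ltngtP => [ab | ab | /val_inj eq_ab]; last by rewrite eq_ab eqxx in ne_ab.
all: case: ltngtP => [bc | bc | /val_inj eq_bc]; last by rewrite eq_bc eqxx in ne_bc.
all: case: ltngtP => [ac | ac | /val_inj eq_ac]; last by rewrite eq_ac eqxx in ne_ac.
all: try by exfalso; lia.
- move=> nab nbc; apply/negP => /(join_inv_split ab bc).
  by rewrite (negPf nab) (negPf nbc).
- by move=> nab cb; apply: contra nab => ac'; exact: join_inv_trans ac' cb.
- by move=> nab /(join_inv_split ac ab); rewrite (negPf nab) orbF.
- by move=> ba nbc; apply: contra nbc; exact: join_inv_trans ba.
- by move=> /(join_inv_split bc ac) ba nbc; rewrite (negPf nbc) in ba.
- by move=> ba cb; exact: join_inv_trans cb ba.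
Qed.

Definition weak_join : 'S_n := perm_of_order join_lt_irr join_lt_trans join_lt_total.

Lemma inversion_weak_join a b : inversion weak_join a b = join_inv a b.
Proof. by rewrite /inversion perm_of_order_ltE /join_lt /join_inv; case: ltngtP. Qed.

Lemma weak_join_ubl : weak_le x weak_join.
Proof.
by apply/weak_leP => a b xab; rewrite inversion_weak_join join_step_inv // /join_step xab.
Qed.

Lemma weak_join_ubr : weak_le y weak_join.
Proof.
by apply/weak_leP => a b yab; rewrite inversion_weak_join join_step_inv // /join_step yab orbT.
Qed.

Lemma weak_join_min (R : rel 'I_n) : transitive R ->
  subrel (inversion x) R -> subrel (inversion y) R -> subrel (inversion weak_join) R.
Proof.
move=> R_tr xR yR a b; rewrite inversion_weak_join; apply: join_inv_min => // c d.
by case/orP; [exact: xR | exact: yR].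
Qed.

Lemma weak_join_least z : weak_le x z -> weak_le y z -> weak_le weak_join z.
Proof.
move=> /weak_leP xz /weak_leP yz; apply/weak_leP.
by apply: weak_join_min => // b a c; exact: inversion_trans.
Qed.

End WeakJoin.

Section Regions.
Variables (n : nat) (J : {set 'I_n.-1}).
Implicit Types (w : 'S_n) (a b i j k : 'I_n).

(* A generator [s \notin J] is a wall between positions [s] and [s.+1]; the
   J-region of a position is numbered by the walls to its left. *)
Definition walls_before (p : nat) := [set s : 'I_n.-1 | (s < p) && (s \notin J)].

Definition region (p : nat) := #|walls_before p|.

Lemma leq_region p q : p <= q -> region p <= region q.
Proof.
move=> pq; apply: subset_leq_card; apply/subsetP => s; rewrite !inE.
by case/andP=> sp ->; rewrite (leq_trans sp pq).
Qed.

Lemma region_ltn p q : region p < region q -> p < q.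
Proof. by apply: contraLR; rewrite -!leqNgt; exact: leq_region. Qed.

Lemma sepJ_region p q : sepJ J p q = (region p < region q).
Proof.
apply/existsP/idP => [[s /andP[/andP[ps sq] sJ]] | ].
  apply: proper_card; apply/properP; split.
    apply/subsetP => t; rewrite !inE => /andP[tp ->]; rewrite andbT.
    exact: leq_trans tp (leq_trans ps (ltnW sq)).
  by exists s; rewrite !inE ?sq ?sJ ?andbT -?leqNgt.
move=> lt_pq; have /subsetPn[s] : ~~ (walls_before q \subset walls_before p).
  by apply: contraTN lt_pq => /subset_leq_card; rewrite -leqNgt.
rewrite !inE => /andP[sq sJ]; rewrite sJ andbT -leqNgt => ps.
by exists s; rewrite ps sq sJ.
Qed.

Definition adjJ a b : bool :=
  [exists s in J, (a == s :> nat) && (b == s.+1 :> nat)].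

Lemma adjJ_lt a b : adjJ a b -> a < b.
Proof. by case/exists_inP => s _ /andP[/eqP -> /eqP ->]. Qed.

Lemma adjJ_region a b : adjJ a b -> region a = region b.
Proof.
move=> adj; apply/eqP; rewrite eqn_leq leq_region ?(ltnW (adjJ_lt adj)) //=.
rewrite leqNgt -sepJ_region; case/exists_inP: adj => s sJ /andP[/eqP a_s /eqP b_s].
apply/existsP => -[t /andP[/andP[le_at lt_tb] tJ]].
have ts : t = s by apply: ord_inj; apply/eqP; rewrite eqn_leq -ltnS -b_s lt_tb -a_s le_at.
by rewrite ts sJ in tJ.
Qed.

Lemma parabolicP w : reflect (forall a b, adjJ a b -> w a < w b) (parabolic J w).
Proof.
apply: (iffP forall_inP) => [Pw a b /exists_inP[s sJ ab_s] | asc s sJ].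
  by have /forallP/(_ a)/forallP/(_ b)/implyP := Pw s sJ; apply.
apply/forallP => a; apply/forallP => b; apply/implyP => ab_s.
by apply: asc; apply/exists_inP; exists s.
Qed.

Lemma parabolic1 : parabolic J (1%g : 'S_n).
Proof. by apply/parabolicP => a b /adjJ_lt; rewrite !perm1. Qed.

Definition pattern231 w i j k := [&& i < j, j < k, region i < region j, region j < region k,
  w k < w i, w i < w j & w i == (w k).+1 :> nat].

Lemma pattern231P w : reflect (exists i j k, pattern231 w i j k) (~~ avoid231 J w).
Proof.
have sepE i j k : [&& i < j, j < k, sepJ J i j, sepJ J j k, sepJ J i k,
    w k < w i, w i < w j & val (w i) == (w k).+1] = pattern231 w i j k.
  rewrite /pattern231 !sepJ_region.
  case: (ltnP (region i) (region j)) => //= rij.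
  by case: (ltnP (region j) (region k)) => //= rjk; rewrite (ltn_trans rij rjk).
rewrite negbK; apply: (iffP existsP) => [[i /existsP[j /existsP[k]]] | [i [j [k]]]].
  by rewrite sepE; exists i, j, k.
by rewrite -sepE => pat; exists i; apply/existsP; exists j; apply/existsP; exists k.
Qed.

Lemma avoid231_pattern w i j k : avoid231 J w -> ~~ pattern231 w i j k.
Proof. by apply: contraL => pat; apply/pattern231P; exists i, j, k. Qed.

End Regions.

Lemma tperm_val n (x y z : 'I_n) :
  val (tperm x y z) = if val z == val x then val y else if val z == val y then val x else val z.
Proof.
case: (tpermP x y z) => [-> | -> | /eqP zx /eqP zy]; first by rewrite eqxx.
  by case: eqP => [-> | _]; rewrite ?eqxx.
by rewrite val_eqE (negPf zx) val_eqE (negPf zy).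
Qed.

Lemma ltn_tperm_succ n (x y c d : 'I_n) : x = y.+1 :> nat ->
  ~~ ((c == x) && (d == y)) -> ~~ ((c == y) && (d == x)) ->
  (tperm x y c < tperm x y d) = (c < d).
Proof.
rewrite !tperm_val -!val_eqE.
by move=> xy /nandP[] /eqP ? /nandP[] /eqP ?; repeat case: eqP => ?; apply/idP/idP; simpl in *; lia.
Qed.

Section SwapValues.
Variables (n : nat) (w : 'S_n) (i k : 'I_n).

Definition swap_vals : 'S_n := (w * tperm (w i) (w k))%g.

Hypotheses (w_ik : w i = (w k).+1 :> nat) (ik : i < k).

Lemma inversion_swap_vals a b : ~~ ((a == i) && (b == k)) ->
  inversion swap_vals a b = inversion w a b.
Proof.
move=> not_ik; rewrite /inversion; case: (ltnP a b) => //= ab.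
rewrite !permM ltn_tperm_succ // !(inj_eq perm_inj) 1?andbC //.
by apply/negP => /andP[/eqP ak /eqP bi]; rewrite ak bi in ab; move: (ltn_trans ab ik); rewrite ltnn.
Qed.

Lemma inversion_swap_vals_ik : inversion swap_vals i k = false.
Proof. by rewrite /inversion ik !permM tpermL tpermR /= w_ik ltnNge leqnSn. Qed.

Lemma swap_vals_le : weak_le swap_vals w.
Proof.
apply/weak_leP => a b; have [/andP[/eqP -> /eqP ->] | not_ik] := boolP ((a == i) && (b == k)).
  by rewrite inversion_swap_vals_ik.
by rewrite inversion_swap_vals.
Qed.

Lemma weak_le_swap_vals u : weak_le u w -> ~~ inversion u i k -> weak_le u swap_vals.
Proof.
move=> /weak_leP uw not_uik; apply/weak_leP => a b inv_ab.
have [/andP[/eqP ai /eqP bk] | not_ik] := boolP ((a == i) && (b == k)).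
  by rewrite -ai -bk inv_ab in not_uik.
by rewrite inversion_swap_vals // uw.
Qed.

Lemma length_swap_vals : perm_length swap_vals < perm_length w.
Proof.
apply: proper_card; apply/properP; split.
  by apply/subsetP => p; rewrite !inE; move/weak_leP: swap_vals_le; apply.
by exists (i, k); rewrite !inE /= ?inversion_swap_vals_ik // /inversion ik w_ik ltnSn.
Qed.

Lemma parabolic_swap_vals J :
  region J i < region J k -> parabolic J w -> parabolic J swap_vals.
Proof.
move=> rik /parabolicP Pw; apply/parabolicP => a b adj; have ab := adjJ_lt adj.
have [/andP[/eqP ai /eqP bk] | not_ik] := boolP ((a == i) && (b == k)).
  by move: rik; rewrite -ai -bk (adjJ_region adj) ltnn.
rewrite perm_ltNlt; last by rewrite neq_ltn ab.
have := inversion_swap_vals not_ik; rewrite /inversion ab /= => ->.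
by rewrite -leqNgt ltnW // Pw.
Qed.

End SwapValues.

Section PiDown.
Variables (n : nat) (J : {set 'I_n.-1}).
Implicit Types (p q t w x y : 'S_n) (a b i j k : 'I_n).
Local Notation region := (region J).

Lemma avoid231_between t i j k : avoid231 J t ->
  j < k -> region i < region j -> region j < region k -> t k < t i -> t i < t j ->
  exists2 p : 'I_n, region p = region j & t k < t p < t i.
Proof.
move=> avt + rij + + tij; have [m] := ubnP (t i - t k).
elim: m k => // m IHm k lt_m jk rjk tki.
have tk_lt_n : (t k).+1 < n by exact: leq_ltn_trans tki (ltn_ord (t i)).
have [p tp] : exists p : 'I_n, t p = (t k).+1 :> nat.
  by exists ((t^-1)%g (Ordinal tk_lt_n)); rewrite permKV.
have ij := region_ltn rij.
move: (tki); rewrite leq_eqVlt => /orP[/eqP tik | tpi].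
  by case/negP: (avoid231_pattern i j k avt); rewrite /pattern231 ij jk rij rjk tki tij -tik eqxx.
rewrite -tp in tpi.
have [rpj | rjp | rpj] := ltngtP (region p) (region j).
- case/negP: (avoid231_pattern p j k avt).
  by rewrite /pattern231 (region_ltn rpj) jk rpj rjk (ltn_trans tpi tij) tp ltnSn eqxx.
- have [|q rq /andP[tpq tqi]] := IHm p _ (region_ltn rjp) rjp tpi.
    by rewrite tp subnS -ltnS prednK // subn_gt0.
  by exists q => //; rewrite tqi andbT (ltn_trans _ tpq) // tp.
- by exists p; rewrite // tpi tp ltnSn.
Qed.

Lemma isPiDownP w p : reflect
  [/\ T231 J p, weak_le p w & forall q, T231 J q -> weak_le q w -> weak_le q p]
  (isPiDown J w p).
Proof.
apply: (iffP and3P) => [[Tp pw /forallP maxp] | [Tp pw maxp]]; split => //.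
  by move=> q Tq qw; apply: (implyP (maxp q)); rewrite Tq qw.
by apply/forallP => q; apply/implyP => /andP[]; exact: maxp.
Qed.

Lemma avoid231_le_swap t w i j k : avoid231 J t -> weak_le t w ->
  pattern231 J w i j k -> weak_le t (swap_vals w i k).
Proof.
move=> avt tw /and5P[ij jk rij rjk /and3P[_ wij /eqP w_ik]].
apply: weak_le_swap_vals => //; first exact: ltn_trans ij jk.
apply/negP => /andP[_ tki]; have tij := weak_le_ascent tw ij wij.
have [p rp /andP[tkp tpi]] := avoid231_between avt jk rij rjk tki tij.
have ip : i < p by apply: (region_ltn (J := J)); rewrite rp.
have pk : p < k by apply: (region_ltn (J := J)); rewrite rp.
have /andP[_ wpi] : inversion w i p by move/weak_leP: tw; apply; rewrite /inversion ip.
have /andP[_ wkp] : inversion w p k by move/weak_leP: tw; apply; rewrite /inversion pk.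
by move: wpi; rewrite w_ik ltnS leqNgt wkp.
Qed.

Lemma exists_isPiDown w : parabolic J w -> exists p, isPiDown J w p.
Proof.
have [m] := ubnP (perm_length w); elim: m w => // m IHm w /ltnSE lenw Pw.
have [avw | /pattern231P[i [j [k pat]]]] := boolP (avoid231 J w).
  by exists w; apply/isPiDownP; split; rewrite ?weak_le_refl // /T231 Pw avw.
have /and5P[ij jk rij rjk /and3P[_ _ /eqP w_ik]] := pat; have ik := ltn_trans ij jk.
have len_sw := leq_trans (length_swap_vals w_ik ik) lenw.
have P_sw := parabolic_swap_vals w_ik ik (ltn_trans rij rjk) Pw.
have [p /isPiDownP[Tp pc maxp]] := IHm _ len_sw P_sw.
exists p; apply/isPiDownP; split => //; first exact: weak_le_trans pc (swap_vals_le w_ik ik).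
by move=> q /[dup] Tq /andP[_ avq] qw; apply/maxp/(avoid231_le_swap avq qw pat).
Qed.

Definition pi_down w := odflt w (PiDown J w).

Lemma PiDownE w : parabolic J w -> PiDown J w = Some (pi_down w).
Proof.
move=> Pw; rewrite /pi_down /PiDown; case: pickP => [//|none].
by have [p] := exists_isPiDown Pw; rewrite none.
Qed.

Lemma isPiDown_pi_down w : parabolic J w -> isPiDown J w (pi_down w).
Proof. by move/PiDownE; rewrite /PiDown; case: pickP => // p isp [<-]. Qed.

Lemma isPiDown_uniq w p q : isPiDown J w p -> isPiDown J w q -> p = q.
Proof.
move=> /isPiDownP[Tp pw maxp] /isPiDownP[Tq qw maxq].
by apply: weak_le_anti; [exact: maxq | exact: maxp].
Qed.

Lemma ThetaE x y : parabolic J x -> parabolic J y ->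
  Theta J x y = (pi_down x == pi_down y).
Proof.
by move=> Px Py; rewrite /Theta (PiDownE Px) (PiDownE Py) (inj_eq (@Some_inj _)).
Qed.

Lemma T231_pi_down w : parabolic J w -> T231 J (pi_down w).
Proof. by case/isPiDown_pi_down/isPiDownP. Qed.

Lemma parabolic_pi_down w : parabolic J w -> parabolic J (pi_down w).
Proof. by case/T231_pi_down/andP. Qed.

Lemma pi_down_le w : parabolic J w -> weak_le (pi_down w) w.
Proof. by case/isPiDown_pi_down/isPiDownP. Qed.

Lemma pi_down_max w q : parabolic J w -> T231 J q -> weak_le q w -> weak_le q (pi_down w).
Proof. by case/isPiDown_pi_down/isPiDownP => _ _; apply. Qed.

Lemma pi_down_id t : T231 J t -> pi_down t = t.
Proof.
move=> Tt; have /andP[Pt _] := Tt; apply: isPiDown_uniq (isPiDown_pi_down Pt) _.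
by apply/isPiDownP; split; rewrite ?weak_le_refl.
Qed.

Lemma pi_down_mono x y : parabolic J x -> parabolic J y ->
  weak_le x y -> weak_le (pi_down x) (pi_down y).
Proof.
move=> Px Py xy; apply: (pi_down_max Py (T231_pi_down Px)).
exact: weak_le_trans (pi_down_le Px) xy.
Qed.

Lemma pi_down_swap w i j k : parabolic J w -> pattern231 J w i j k ->
  pi_down (swap_vals w i k) = pi_down w.
Proof.
move=> Pw pat; have /and5P[ij jk rij rjk /and3P[_ _ /eqP w_ik]] := pat.
have ik := ltn_trans ij jk; have P_sw := parabolic_swap_vals w_ik ik (ltn_trans rij rjk) Pw.
apply: weak_le_anti; first exact: pi_down_mono (swap_vals_le w_ik ik).
apply: (pi_down_max P_sw (T231_pi_down Pw)); have /andP[_ av] := T231_pi_down Pw.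
exact: avoid231_le_swap av (pi_down_le Pw) pat.
Qed.

End PiDown.

Section Lattice.
Variables (n : nat) (J : {set 'I_n.-1}).
Implicit Types (m x y z : 'S_n) (a b : 'I_n).

Lemma isJoinP x y m : reflect
  [/\ parabolic J m, weak_le x m, weak_le y m &
      forall z, parabolic J z -> weak_le x z -> weak_le y z -> weak_le m z]
  (isJoin J x y m).
Proof.
apply: (iffP and4P) => [[Pm xm ym /forallP minm] | [Pm xm ym minm]]; split => //.
  by move=> z Pz xz yz; apply: (implyP (minm z)); rewrite Pz xz yz.
by apply/forallP => z; apply/implyP => /andP[/andP[]]; exact: minm.
Qed.

Lemma isMeetP x y m : reflect
  [/\ parabolic J m, weak_le m x, weak_le m y &
      forall z, parabolic J z -> weak_le z x -> weak_le z y -> weak_le z m]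
  (isMeet J x y m).
Proof.
apply: (iffP and4P) => [[Pm mx my /forallP maxm] | [Pm mx my maxm]]; split => //.
  by move=> z Pz zx zy; apply: (implyP (maxm z)); rewrite Pz zx zy.
by apply/forallP => z; apply/implyP => /andP[/andP[]]; exact: maxm.
Qed.

Lemma parabolic_weak_join x y :
  parabolic J x -> parabolic J y -> parabolic J (weak_join x y).
Proof.
move=> Px Py; pose R a b := (a < b) && ~~ adjJ J a b.
have R_tr : transitive R.
  move=> b a c /andP[ab _] /andP[bc _]; rewrite /R (ltn_trans ab bc) /=.
  apply: contraL bc => /exists_inP[s _ /andP[/eqP a_s /eqP c_s]].
  by rewrite c_s ltnS -ltnNge -a_s.
have inv_R z : parabolic J z -> subrel (inversion z) R.
  move=> /parabolicP Pz a b /andP[ab zba]; rewrite /R ab /=.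
  by apply: contraL zba => /Pz zab; rewrite -leqNgt ltnW.
apply/parabolicP => a b adj; have ab := adjJ_lt adj.
rewrite perm_ltNlt; last by rewrite neq_ltn ab.
apply/negP => wba; have inv_ab : inversion (weak_join x y) a b by rewrite /inversion ab.
by have /andP[_] := weak_join_min R_tr (inv_R x Px) (inv_R y Py) inv_ab; rewrite adj.
Qed.

Lemma isJoin_weak_join x y :
  parabolic J x -> parabolic J y -> isJoin J x y (weak_join x y).
Proof.
move=> Px Py; apply/isJoinP; split; last by move=> z _; exact: weak_join_least.
- exact: parabolic_weak_join.
- exact: weak_join_ubl.
- exact: weak_join_ubr.
Qed.

Lemma isJoinE x y m :
  parabolic J x -> parabolic J y -> isJoin J x y m -> m = weak_join x y.
Proof.
move=> Px Py /isJoinP[Pm xm ym minm].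
have /isJoinP[Pj xj yj minj] := isJoin_weak_join Px Py.
by apply: weak_le_anti; [exact: minm | exact: minj].
Qed.

Lemma exists_isMeet x y : parabolic J x -> parabolic J y -> exists m, isMeet J x y m.
Proof.
move=> Px Py; pose lower := [pred z | [&& parabolic J z, weak_le z x & weak_le z y]].
have lower1 : lower 1%g by rewrite /= parabolic1 !weak_le1.
case: (arg_maxnP (@perm_length n) lower1) => m /and3P[Pm mx my] maxm.
exists m; apply/isMeetP; split => // z Pz zx zy.
have /maxm len_j : lower (weak_join m z).
  by rewrite /= parabolic_weak_join // !weak_join_least.
by rewrite (weak_le_length_eq (weak_join_ubl m z) len_j); exact: weak_join_ubr.
Qed.

End Lattice.

Section InversionsWith.
Variables (n : nat) (u : 'S_n) (i k : 'I_n).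
Implicit Types (a b c : 'I_n).

Definition inv_le a b := (a == b) || inversion u a b.

Lemma inv_le_leq a b : inv_le a b -> a <= b.
Proof. by case/orP => [/eqP -> // | /andP[/ltnW]]. Qed.

Lemma inv_le_trans : transitive inv_le.
Proof.
move=> b a c /orP[/eqP -> // | uab] /orP[/eqP <- | ubc]; rewrite /inv_le ?uab ?orbT //.
by rewrite (inversion_trans uab ubc) orbT.
Qed.

Lemma inversion_inv_le a b : inversion u a b -> inv_le a b.
Proof. by move=> uab; rewrite /inv_le uab orbT. Qed.

(* The transitive closure of the inversions of [u] together with the pair [(i, k)]. *)
Definition inv_with a b := inversion u a b || inv_le a i && inv_le k b.

Lemma inv_with_trans : i < k -> transitive inv_with.
Proof.
move=> ik b a c /orP[uab | /andP[ai kb]] /orP[ubc | /andP[bi kc]].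
- by rewrite /inv_with (inversion_trans uab ubc).
- by rewrite /inv_with kc (inv_le_trans (inversion_inv_le uab) bi) orbT.
- by rewrite /inv_with ai (inv_le_trans kb (inversion_inv_le ubc)) orbT.
- by move: (leq_trans (inv_le_leq kb) (inv_le_leq bi)); rewrite leqNgt ik.
Qed.

Lemma inv_withE a b : (b < k) || (i < a) -> inv_with a b = inversion u a b.
Proof.
move=> out; rewrite /inv_with orb_idr // => /andP[/inv_le_leq ai /inv_le_leq kb].
by case/orP: out; rewrite ltnNge ?kb ?ai.
Qed.

End InversionsWith.

Section JoinSwap.
Variables (n : nat) (J : {set 'I_n.-1}) (u w : 'S_n) (i j k : 'I_n).
Hypotheses (pat : pattern231 J w i j k) (sw_u : weak_le (swap_vals w i k) u).

Lemma inversion_weak_join_swap : subrel (inversion (weak_join u w)) (inv_with u i k).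
Proof.
have /and5P[ij jk _ _ /and3P[_ _ /eqP w_ik]] := pat; have ik := ltn_trans ij jk.
move/weak_leP: sw_u => sw_inv; apply: weak_join_min; first exact: inv_with_trans.
  by move=> a b uab; rewrite /inv_with uab.
move=> a b wab; have [/andP[ai bk] | not_ik] := boolP ((a == i) && (b == k)).
  by move: ai bk => /eqP -> /eqP ->; rewrite /inv_with /inv_le !eqxx orbT.
by apply/orP; left; apply: sw_inv; rewrite inversion_swap_vals.
Qed.

Lemma inversion_swap_jk : inversion u j k.
Proof.
have /and5P[ij jk _ _ /and3P[wki wij /eqP w_ik]] := pat.
move/weak_leP: sw_u; apply; rewrite inversion_swap_vals ?(ltn_trans ij jk) //.
  by rewrite /inversion jk (ltn_trans wki wij).
by apply/nandP; left; rewrite neq_ltn ij orbT.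
Qed.

(* A t-inversion (a, b) missing from u must pass through (i, k); as t avoids
   231, some p in the region of j splits it into the u-inversions (a, p), (p, b). *)
Lemma weak_join_swap_avoid231 t :
  avoid231 J t -> weak_le t (weak_join u w) -> weak_le t u.
Proof.
move=> avt /weak_leP t_join; have /and5P[ij jk rij rjk _] := pat.
have t_with a b : inversion t a b -> inv_with u i k a b.
  by move/t_join; exact: inversion_weak_join_swap.
apply/weak_leP => a b tab; apply/negPn/negP => not_uab.
have /orP[uab | /andP[ai kb]] := t_with a b tab; first by rewrite uab in not_uab.
have /andP[ab tba] := tab; have /andP[_ ukj] := inversion_swap_jk.
have aj : a < j := leq_ltn_trans (inv_le_leq ai) ij.
have jb : j < b := leq_trans jk (inv_le_leq kb).
have uab : u a < u b.
  by rewrite perm_ltNlt; [move: not_uab; rewrite /inversion ab | rewrite neq_ltn ab].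
have ubk : u b <= u k by case/orP: kb => [/eqP <- | /andP[_ /ltnW]].
have not_with_aj : ~~ inv_with u i k a j.
  rewrite inv_withE ?jk // /inversion aj -leqNgt.
  exact: ltnW (leq_ltn_trans (leq_trans (ltnW uab) ubk) ukj).
have taj : t a < t j.
  rewrite perm_ltNlt; last by rewrite neq_ltn aj.
  by apply: contra not_with_aj => tja; apply: t_with; rewrite /inversion aj.
have raj : region J a < region J j := leq_ltn_trans (leq_region J (inv_le_leq ai)) rij.
have rjb : region J j < region J b := leq_trans rjk (leq_region J (inv_le_leq kb)).
have [p rp /andP[tbp tpa]] := avoid231_between avt jb raj rjb tba taj.
have ip : i < p by apply: (region_ltn (J := J)); rewrite rp.
have pk : p < k by apply: (region_ltn (J := J)); rewrite rp.
have uap : inversion u a p.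
  rewrite -(@inv_withE _ u i k) ?pk //; apply: t_with.
  by rewrite /inversion (leq_ltn_trans (inv_le_leq ai) ip).
have upb : inversion u p b.
  rewrite -(@inv_withE _ u i k) ?ip ?orbT //; apply: t_with.
  by rewrite /inversion (leq_trans pk (inv_le_leq kb)).
by rewrite (inversion_trans uap upb) in not_uab.
Qed.

End JoinSwap.

Section Congruence.
Variables (n : nat) (J : {set 'I_n.-1}).
Implicit Types (m t x y z : 'S_n).
Local Notation pi_down := (pi_down J).

Lemma avoid231_le_join_pi_down t x z : parabolic J x -> avoid231 J t ->
  weak_le t (weak_join x z) -> weak_le t (weak_join (pi_down x) z).
Proof.
have [N] := ubnP (perm_length x); elim: N x => // N IHN x /ltnSE lenx Px avt tx.
have [avx | /pattern231P[i [j [k pat]]]] := boolP (avoid231 J x).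
  by rewrite pi_down_id // /T231 Px avx.
have /and5P[ij jk rij rjk /and3P[_ _ /eqP x_ik]] := pat; have ik := ltn_trans ij jk.
have len_sw := leq_trans (length_swap_vals x_ik ik) lenx.
have P_sw := parabolic_swap_vals x_ik ik (ltn_trans rij rjk) Px.
rewrite -(pi_down_swap Px pat); apply: (IHN _ len_sw P_sw avt).
apply: weak_join_swap_avoid231 pat (weak_join_ubl _ _) _ avt _.
apply: weak_le_trans tx _; apply: weak_join_least; first exact: weak_join_ubr.
exact: weak_le_trans (weak_join_ubr _ _) (weak_join_ubl _ _).
Qed.

Lemma pi_down_weak_join x z : parabolic J x -> parabolic J z ->
  pi_down (weak_join x z) = pi_down (weak_join (pi_down x) z).
Proof.
move=> Px Pz; have Ppx := parabolic_pi_down Px.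
have Pj := parabolic_weak_join Px Pz; have Ppj := parabolic_weak_join Ppx Pz.
apply: weak_le_anti.
  apply: (pi_down_max Ppj (T231_pi_down Pj)); have /andP[_ av] := T231_pi_down Pj.
  exact: avoid231_le_join_pi_down Px av (pi_down_le Pj).
apply: pi_down_mono => //; apply: weak_join_least; last exact: weak_join_ubr.
exact: weak_le_trans (pi_down_le Px) (weak_join_ubl x z).
Qed.

Lemma Theta_join x y z m1 m2 : parabolic J x -> parabolic J y -> parabolic J z ->
  Theta J x y -> isJoin J x z m1 -> isJoin J y z m2 -> Theta J m1 m2.
Proof.
move=> Px Py Pz; rewrite ThetaE // => /eqP pxy /(isJoinE Px Pz) -> /(isJoinE Py Pz) ->.
by rewrite ThetaE ?parabolic_weak_join // pi_down_weak_join // pxy -pi_down_weak_join.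
Qed.

Lemma pi_down_meet_le x y z m1 m2 : parabolic J x -> parabolic J y ->
  pi_down x = pi_down y -> isMeet J x z m1 -> isMeet J y z m2 ->
  weak_le (pi_down m1) (pi_down m2).
Proof.
move=> Px Py pxy /isMeetP[P1 m1x m1z _] /isMeetP[P2 m2y m2z max2].
apply: (pi_down_max P2 (T231_pi_down P1)); apply: max2; first exact: parabolic_pi_down.
  by apply: weak_le_trans (pi_down_le Py); rewrite -pxy; exact: pi_down_mono.
exact: weak_le_trans (pi_down_le P1) m1z.
Qed.

Lemma Theta_meet x y z m1 m2 : parabolic J x -> parabolic J y ->
  Theta J x y -> isMeet J x z m1 -> isMeet J y z m2 -> Theta J m1 m2.
Proof.
move=> Px Py; rewrite ThetaE // => /eqP pxy M1 M2.
have /isMeetP[P1 _ _ _] := M1; have /isMeetP[P2 _ _ _] := M2.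
rewrite ThetaE //; apply/eqP/weak_le_anti; first exact: pi_down_meet_le M1 M2.
exact: pi_down_meet_le (esym pxy) M2 M1.
Qed.

Lemma Theta_meet_weak_le x y m : parabolic J x -> parabolic J y -> isMeet J x y m ->
  Theta J m x = weak_le (pi_down x) (pi_down y).
Proof.
move=> Px Py /isMeetP[Pm mx my maxm]; rewrite ThetaE //.
apply/idP/idP => [/eqP <- | pxy]; first exact: pi_down_mono.
apply/eqP/weak_le_anti; first exact: pi_down_mono.
apply: (pi_down_max Pm (T231_pi_down Px)); apply: maxm (parabolic_pi_down Px) (pi_down_le Px) _.
exact: weak_le_trans pxy (pi_down_le Py).
Qed.

End Congruence.

Theorem proposition3p18 (n : nat) (J : {set 'I_n.-1}) :
  (* Pi_down^J is well defined on S_n^J *)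
  (forall w : 'S_n, parabolic J w -> exists p, isPiDown J w p) /\
  (* S_n^J is a lattice for the weak order *)
  (forall x y : 'S_n, parabolic J x -> parabolic J y ->
     (exists m, isMeet J x y m) /\ (exists m, isJoin J x y m)) /\
  (* Theta is a lattice congruence *)
  (forall x y z m1 m2 : 'S_n, parabolic J x -> parabolic J y -> parabolic J z ->
     Theta J x y -> isMeet J x z m1 -> isMeet J y z m2 -> Theta J m1 m2) /\
  (forall x y z m1 m2 : 'S_n, parabolic J x -> parabolic J y -> parabolic J z ->
     Theta J x y -> isJoin J x z m1 -> isJoin J y z m2 -> Theta J m1 m2) /\
  (* the quotient lattice S_n^J / Theta is isomorphic to (S_n^J(231), weak order):
     f induces a bijection from Theta-classes onto S_n^J(231) which is an order
     isomorphism, where [x] <= [y] in the quotient iff (x /\ y) Theta x *)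
  (exists f : 'S_n -> 'S_n,
     (forall w, parabolic J w -> T231 J (f w)) /\
     (forall t, T231 J t -> exists w, parabolic J w /\ f w = t) /\
     (forall x y, parabolic J x -> parabolic J y -> (f x = f y <-> Theta J x y)) /\
     (forall x y m, parabolic J x -> parabolic J y -> isMeet J x y m ->
        (Theta J m x <-> weak_le (f x) (f y)))).
Proof.
split; first exact: exists_isPiDown.
split.
  move=> x y Px Py; split; first exact: exists_isMeet.
  by exists (weak_join x y); exact: isJoin_weak_join.
split; first by move=> x y z m1 m2 Px Py _; exact: Theta_meet.
split; first exact: Theta_join.
exists (pi_down J); split; first exact: T231_pi_down.
split; first by move=> t Tt; exists t; split; [case/andP: Tt | exact: pi_down_id].
split; first by move=> x y Px Py; rewrite ThetaE //; split => [-> | /eqP].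
by move=> x y m Px Py M; rewrite (Theta_meet_weak_le Px Py M).
Qed.
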